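(* Let $x$ be an irrational real number and $f_x(t):=f(x+i/t)$ for $t>0$. If $t_0>0$ is a point where $f_x$ has a local minimum, then there exist $g\in\mathrm{PSL}_2(\mathbb{Z})$ with $x+i/t_0\in g\cdot(D_0+n)$ for some $n\in\mathbb{Z}$, and, writing $g\cdot\infty=p/q$ in lowest terms with $q>0$, one has $t_0=\left|q/(qx-p)\right|$ and $f_x(t_0)=2\,|q(qx-p)|$.
   Context: $\mathbb{H}=\{\omega\in\mathbb{C}:\mathrm{Im}(\omega)>0\}$. For $\omega\in\mathbb{H}$, $d(\omega)=\min\{|\alpha+\beta\omega| : \alpha,\beta\in\mathbb{Z},\ (\alpha,\beta)\neq(0,0)\}$ and $f(\omega)=d(\omega)^2/\mathrm{Im}(\omega)$. $\mathrm{PSL}_2(\mathbb{Z})$ acts by $\begin{pmatrix}a&b\\c&d\end{pmatrix}\cdot\omega=\frac{a\omega+b}{c\omega+d}$, with $g\cdot\infty=a/c$ if $c\neq0$ and $\infty$ otherwise. $D_0=\{\omega: -1/2\le\mathrm{Re}(\omega)\le1/2,\ |\omega|\ge1\}$; the sets $g\cdot(D_0+n)$, $g\in\mathrm{PSL}_2(\mathbb{Z})$, $n\in\mathbb{Z}$, cover $\mathbb{H}$, and on such a set with cusp $g\cdot\infty=p/q$ one has $f(x+i/t)=(qx-p)^2t+q^2/t$. *)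

From Stdlib Require Import Reals ZArith Znumtheory.
From Coquelicot Require Import Coquelicot.
Open Scope R_scope.

Definition dvals (w : C) (r : R) : Prop :=
  exists alpha beta : Z, (alpha, beta) <> (0%Z, 0%Z) /\
    r = Cmod (Cplus (RtoC (IZR alpha)) (Cmult (RtoC (IZR beta)) w)).

(* d(w) = min of the above set (for w in H the minimum is attained, so it
   equals the infimum). *)
Definition dH (w : C) : R := real (Glb_Rbar (dvals w)).

Definition fH (w : C) : R := (dH w) ^ 2 / Im w.

Definition fx (x t : R) : R := fH (Cplus (RtoC x) (Cmult Ci (RtoC (/ t)))).

Definition mobius (a b c d : Z) (w : C) : C :=
  Cdiv (Cplus (Cmult (RtoC (IZR a)) w) (RtoC (IZR b)))
       (Cplus (Cmult (RtoC (IZR c)) w) (RtoC (IZR d))).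

(* An element of PSL_2(Z) is represented by any integer matrix of determinant 1
   (both lifts give the same action). *)
Definition is_SL2Z (a b c d : Z) : Prop := (a * d - b * c)%Z = 1%Z.

Definition D0 (w : C) : Prop :=
  0 < Im w /\ -1/2 <= Re w <= 1/2 /\ 1 <= Cmod w.

Definition in_gD0n (a b c d n : Z) (w : C) : Prop :=
  exists z : C, D0 z /\ w = mobius a b c d (Cplus z (RtoC (IZR n))).

Definition irrational (x : R) : Prop :=
  ~ exists p q : Z, q <> 0%Z /\ x = IZR p / IZR q.

Definition local_min_pos (h : R -> R) (t0 : R) : Prop :=
  exists eps : R, Rlt 0 eps /\
    (forall t : R, Rlt 0 t -> Rlt (Rabs (t - t0)) eps -> Rle (h t0) (h t)).

From Stdlib Require Import Reals ZArith Znumtheory Lra Lia Psatz List.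
From Coquelicot Require Import Coquelicot.
Open Scope R_scope.

(* For w = x + i/t, f(w) = t * min |a + b w|^2 over nonzero (a, b) in Z^2, and
   the vector (a, b) contributes the hyperbola (a + b x)^2 t + b^2 / t; thus f_x
   is the lower envelope of these hyperbolas.  At a local minimum t0 the
   hyperbola of a shortest vector (p, -q) is itself critical, i.e.
   (q x - p)^2 t0^2 = q^2, which gives both formulas.  A shortest vector is
   primitive, so p - q w is the denominator of g^-1 w for some g in SL_2(Z)
   with g.oo = p/q, and shortness says exactly that the integer translates of
   g^-1 w closest to the imaginary axis have modulus >= 1. *)

Definition lnorm2 (w : C) (a b : Z) : R :=
  (IZR a + IZR b * Re w) ^ 2 + (IZR b * Im w) ^ 2.

Definition shortest (w : C) (a b : Z) : Prop :=
  (a, b) <> (0%Z, 0%Z) /\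
  forall a' b', (a', b') <> (0%Z, 0%Z) -> lnorm2 w a b <= lnorm2 w a' b'.

Lemma Cplus_Ci_mult (x y : R) : Cplus (RtoC x) (Cmult Ci (RtoC y)) = (x, y).
Proof. unfold Cplus, Cmult, Ci, RtoC; simpl; f_equal; ring. Qed.

Lemma lnorm2_ge0 w a b : 0 <= lnorm2 w a b.
Proof. unfold lnorm2; apply Rplus_le_le_0_compat; apply pow2_ge_0. Qed.

Lemma lnorm2_pos w a b : 0 < Im w -> (a, b) <> (0%Z, 0%Z) -> 0 < lnorm2 w a b.
Proof.
  intros Hw Hab; unfold lnorm2.
  destruct (Z.eq_dec b 0) as [->|Hb].
  - assert (Ha : IZR a <> 0) by (apply not_0_IZR; congruence).
    assert (0 < (IZR a + 0 * Re w) ^ 2) by (apply pow2_gt_0; lra).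
    pose proof (pow2_ge_0 (0 * Im w)); lra.
  - assert (IZR b <> 0) by (apply not_0_IZR; exact Hb).
    assert (0 < (IZR b * Im w) ^ 2).
    { apply pow2_gt_0, Rmult_integral_contrapositive; split; lra. }
    pose proof (pow2_ge_0 (IZR a + IZR b * Re w)); lra.
Qed.

Lemma lnorm2_opp w a b : lnorm2 w (- a) (- b) = lnorm2 w a b.
Proof. unfold lnorm2; rewrite !opp_IZR; ring. Qed.

Lemma Cmod_lattice w a b :
  Cmod (Cplus (RtoC (IZR a)) (Cmult (RtoC (IZR b)) w)) = sqrt (lnorm2 w a b).
Proof. destruct w as [x y]; unfold Cmod, lnorm2; simpl; f_equal; ring. Qed.

Lemma list_argmin_exists {A} (f : A -> R) (l : list A) (a0 : A) :
  In a0 l -> exists a, In a l /\ forall b, In b l -> f a <= f b.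
Proof.
  revert a0; induction l as [|h t IH]; intros a0 Ha0; [destruct Ha0|].
  destruct t as [|h2 t].
  - exists h; split; [now left|]. intros b [<-|[]]; lra.
  - destruct (IH h2 (or_introl eq_refl)) as [m [Hm Hmin]].
    destruct (Rle_lt_dec (f h) (f m)).
    + exists h; split; [now left|]. intros b [<-|Hb]; [lra|]. specialize (Hmin b Hb); lra.
    + exists m; split; [now right|]. intros b [<-|Hb]; [lra|auto].
Qed.

Definition Zsym_range (K : Z) : list Z :=
  map (fun i => (Z.of_nat i - K)%Z) (seq 0 (Z.to_nat (2 * K + 1))).

Lemma In_Zsym_range K a : (- K <= a <= K)%Z -> In a (Zsym_range K).
Proof.
  intros Ha; unfold Zsym_range; apply in_map_iff.
  exists (Z.to_nat (a + K)); split; [lia|]. apply in_seq; lia.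
Qed.

Lemma lnorm2_ge1_outside_box w (K1 K2 a b : Z) :
  0 < Im w -> / Im w <= IZR K1 -> IZR K1 * Rabs (Re w) + 1 <= IZR K2 ->
  (K1 < Z.abs b \/ K2 < Z.abs a)%Z -> 1 <= lnorm2 w a b.
Proof.
  intros Hw HK1 HK2 Hout; unfold lnorm2.
  set (x := Re w) in *; set (y := Im w) in *.
  destruct (Z_lt_le_dec K1 (Z.abs b)) as [Hb|Hb].
  - assert (Hb1 : IZR K1 + 1 <= Rabs (IZR b)).
    { rewrite Rabs_Zabs, <- plus_IZR; apply IZR_le; lia. }
    assert (1 < Rabs (IZR b) * y) by (assert (/ y * y = 1) by (field; lra); nra).
    assert (1 <= (IZR b * y) ^ 2).
    { rewrite <- pow2_abs, Rabs_mult, (Rabs_right y) by lra. nra. }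
    pose proof (pow2_ge_0 (IZR a + IZR b * x)); lra.
  - assert (Ha : IZR K2 + 1 <= Rabs (IZR a)).
    { rewrite Rabs_Zabs, <- plus_IZR; apply IZR_le; lia. }
    assert (Hbx : Rabs (IZR b * x) <= IZR K1 * Rabs x).
    { rewrite Rabs_mult, Rabs_Zabs. apply Rmult_le_compat_r; [apply Rabs_pos|apply IZR_le; lia]. }
    assert (Htri : Rabs (IZR a) <= Rabs (IZR a + IZR b * x) + Rabs (IZR b * x)).
    { rewrite <- (Rabs_Ropp (IZR b * x)).
      replace (IZR a) with (IZR a + IZR b * x + - (IZR b * x)) at 1 by ring.
      apply Rabs_triang. }
    assert (1 <= (IZR a + IZR b * x) ^ 2) by (rewrite <- pow2_abs; nra).
    pose proof (pow2_ge_0 (IZR b * y)); lra.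
Qed.

Lemma shortest_exists w : 0 < Im w -> exists a b, shortest w a b.
Proof.
  intros Hw.
  set (K1 := up (/ Im w)); set (K2 := up (IZR K1 * Rabs (Re w) + 1)).
  destruct (archimed (/ Im w)) as [HK1 _]; fold K1 in HK1.
  destruct (archimed (IZR K1 * Rabs (Re w) + 1)) as [HK2 _]; fold K2 in HK2.
  assert (HK1pos : (0 <= K1)%Z).
  { apply le_IZR. assert (0 < / Im w) by (apply Rinv_0_lt_compat; lra). lra. }
  assert (HK2pos : (1 <= K2)%Z).
  { apply le_IZR. assert (HK1R : 0 <= IZR K1) by (apply IZR_le; lia).
    pose proof (Rmult_le_pos _ _ HK1R (Rabs_pos (Re w))); lra. }
  set (box := filter (fun ab : Z * Z => negb (Z.eqb (fst ab) 0 && Z.eqb (snd ab) 0)%bool)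
                (list_prod (Zsym_range K2) (Zsym_range K1))).
  assert (Hbox : forall a b, (a, b) <> (0%Z, 0%Z) -> (Z.abs a <= K2)%Z -> (Z.abs b <= K1)%Z ->
                 In (a, b) box).
  { intros a b Hab Ha Hb; apply filter_In; split.
    - apply in_prod; apply In_Zsym_range; lia.
    - simpl; destruct (Z.eqb_spec a 0), (Z.eqb_spec b 0); subst; auto. }
  assert (H10 : In (1%Z, 0%Z) box) by (apply Hbox; [congruence|lia|lia]).
  destruct (list_argmin_exists (fun ab => lnorm2 w (fst ab) (snd ab)) box _ H10)
    as [[a b] [Hab Hmin]].
  apply filter_In in Hab as [_ Hnz].
  exists a, b; split.
  { intros E; injection E as -> ->; discriminate. }
  assert (Hle1 : lnorm2 w a b <= 1).
  { replace 1 with (lnorm2 w 1 0) by (unfold lnorm2; simpl; ring). exact (Hmin _ H10). }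
  intros a' b' Hnz'.
  destruct (Z_le_gt_dec (Z.abs a') K2), (Z_le_gt_dec (Z.abs b') K1).
  - exact (Hmin (a', b') (Hbox _ _ Hnz' ltac:(lia) ltac:(lia))).
  all: eapply Rle_trans; [exact Hle1|].
  all: apply (lnorm2_ge1_outside_box w K1 K2); [exact Hw|lra|lra|lia].
Qed.

Lemma dH_shortest w a b : shortest w a b -> dH w = sqrt (lnorm2 w a b).
Proof.
  intros [Hnz Hmin]; unfold dH.
  rewrite (is_glb_Rbar_unique _ (Finite (sqrt (lnorm2 w a b)))); [reflexivity|split].
  - intros r [a' [b' [Hnz' ->]]]; rewrite Cmod_lattice.
    apply sqrt_le_1_alt; auto.
  - intros l Hl; apply Hl; exists a, b; split; [exact Hnz|].
    now rewrite Cmod_lattice.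
Qed.

Lemma fx_shortest x t a b : 0 < t -> shortest (x, / t) a b ->
  fx x t = (IZR a + IZR b * x) ^ 2 * t + IZR b ^ 2 / t.
Proof.
  intros Ht Hsh; unfold fx, fH; rewrite Cplus_Ci_mult, (dH_shortest _ _ _ Hsh).
  rewrite pow2_sqrt by apply lnorm2_ge0.
  unfold lnorm2; simpl; field; lra.
Qed.

Lemma fx_le x t a b : 0 < t -> (a, b) <> (0%Z, 0%Z) ->
  fx x t <= (IZR a + IZR b * x) ^ 2 * t + IZR b ^ 2 / t.
Proof.
  intros Ht Hab.
  assert (Hy : 0 < Im (x, / t)) by (apply Rinv_0_lt_compat; exact Ht).
  destruct (shortest_exists _ Hy) as [a0 [b0 Hsh]].
  rewrite (fx_shortest _ _ _ _ Ht Hsh).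
  pose proof (proj2 Hsh a b Hab) as Hle; unfold lnorm2 in Hle; simpl in Hle.
  replace ((IZR a0 + IZR b0 * x) ^ 2 * t + IZR b0 ^ 2 / t)
    with (t * ((IZR a0 + IZR b0 * x) ^ 2 + (IZR b0 * / t) ^ 2)) by (field; lra).
  replace ((IZR a + IZR b * x) ^ 2 * t + IZR b ^ 2 / t)
    with (t * ((IZR a + IZR b * x) ^ 2 + (IZR b * / t) ^ 2)) by (field; lra).
  apply Rmult_le_compat_l; lra.
Qed.

Lemma shortest_opp w a b : shortest w a b -> shortest w (- a) (- b).
Proof.
  intros [Hnz Hmin]; split.
  - intros E; injection E; intros; apply Hnz; f_equal; lia.
  - intros a' b' H'; rewrite lnorm2_opp; auto.
Qed.

Lemma shortest_coprime w a b : 0 < Im w -> shortest w a b -> Z.gcd a b = 1%Z.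
Proof.
  intros Hw [Hnz Hmin].
  set (g := Z.gcd a b).
  assert (Hg0 : g <> 0%Z) by (intros E; apply Z.gcd_eq_0 in E; apply Hnz; f_equal; lia).
  destruct (Z.eq_dec g 1) as [E|Hg1]; [exact E|exfalso].
  assert (Hg2 : (2 <= g)%Z) by (pose proof (Z.gcd_nonneg a b); lia).
  destruct (Z.gcd_divide_l a b) as [k Hk]; destruct (Z.gcd_divide_r a b) as [m Hm].
  fold g in Hk, Hm.
  assert (Hkm : (k, m) <> (0%Z, 0%Z)) by (intros E; injection E; intros; apply Hnz; f_equal; lia).
  assert (Hscale : lnorm2 w a b = IZR g ^ 2 * lnorm2 w k m).
  { rewrite Hk, Hm; unfold lnorm2; rewrite !mult_IZR; ring. }
  specialize (Hmin k m Hkm); pose proof (lnorm2_pos w k m Hw Hkm).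
  assert (4 <= IZR g ^ 2) by (assert (2 <= IZR g) by (apply IZR_le; lia); nra).
  nra.
Qed.

Lemma hyperbola_local_min A B t0 :
  0 < t0 -> local_min_pos (fun t => A * t + B / t) t0 -> A * t0 ^ 2 = B.
Proof.
  intros Ht0 [eps [Heps Hloc]].
  set (h := fun t => A * t + B / t).
  assert (Hd : derivable_pt_lim h t0 (A - B / t0 ^ 2)).
  { apply is_derive_Reals; unfold h; auto_derive; [lra|field; lra]. }
  set (m := Rmin eps t0).
  assert (Hm : 0 < m) by (apply Rmin_pos; lra).
  assert (Hm1 : m <= eps) by apply Rmin_l.
  assert (Hm2 : m <= t0) by apply Rmin_r.
  assert (H0 := deriv_minimum h (t0 - m) (t0 + m) t0 (exist _ _ Hd)
                  ltac:(lra) ltac:(lra)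
                  ltac:(intros t H1 H2; apply Hloc; [lra|apply Rabs_def1; lra])).
  change (A - B / t0 ^ 2 = 0) in H0.
  apply (Rmult_eq_compat_r (t0 ^ 2)) in H0.
  replace ((A - B / t0 ^ 2) * t0 ^ 2) with (A * t0 ^ 2 - B) in H0 by (field; lra).
  lra.
Qed.

Lemma hyperbola_min_value (t u v : R) : 0 < t -> 0 < v -> u ^ 2 * t ^ 2 = v ^ 2 ->
  t = Rabs (v / u) /\ u ^ 2 * t + v ^ 2 / t = 2 * Rabs (v * u).
Proof.
  intros Ht Hv Huv.
  assert (Hs : t * Rabs u = v).
  { assert ((t * Rabs u) ^ 2 = v ^ 2) by (rewrite Rpow_mult_distr, pow2_abs; lra).
    pose proof (Rmult_le_pos _ _ (Rlt_le _ _ Ht) (Rabs_pos u)). nra. }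
  assert (Hu : Rabs u <> 0) by (intros E; rewrite E in Hs; lra).
  assert (Hu' : u <> 0) by (intros E; apply Hu; rewrite E; apply Rabs_R0).
  rewrite Rabs_div, Rabs_mult, (Rabs_right v) by lra.
  rewrite <- pow2_abs, <- Hs; split; field; lra.
Qed.

Lemma SL2Z_inv a b c d : is_SL2Z a b c d -> is_SL2Z d (- b) (- c) a.
Proof. unfold is_SL2Z; lia. Qed.

Lemma SL2Z_det_C a b c d : is_SL2Z a b c d ->
  Cminus (Cmult (RtoC (IZR a)) (RtoC (IZR d))) (Cmult (RtoC (IZR b)) (RtoC (IZR c))) = RtoC 1.
Proof.
  unfold is_SL2Z; intros Hdet.
  rewrite <- !RtoC_mult, <- RtoC_minus, <- !mult_IZR, <- minus_IZR, Hdet; reflexivity.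
Qed.

Lemma mobius_denom_neq0 a b c d w : is_SL2Z a b c d -> 0 < Im w ->
  Cplus (Cmult (RtoC (IZR c)) w) (RtoC (IZR d)) <> RtoC 0.
Proof.
  unfold is_SL2Z; intros Hdet Hw.
  apply Cmod_gt_0; rewrite Cplus_comm, Cmod_lattice.
  apply sqrt_lt_R0, lnorm2_pos; [exact Hw|].
  intros E; injection E as -> ->; lia.
Qed.

Lemma Im_mobius_pos a b c d w : is_SL2Z a b c d -> 0 < Im w ->
  0 < Im (mobius a b c d w).
Proof.
  intros Hdet Hw.
  assert (Hden : 0 < lnorm2 w d c).
  { apply lnorm2_pos; [exact Hw|]. intros E; injection E as -> ->; unfold is_SL2Z in Hdet; lia. }
  unfold is_SL2Z in Hdet; apply (f_equal IZR) in Hdet.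
  rewrite minus_IZR, !mult_IZR in Hdet.
  destruct w as [x y]; unfold lnorm2 in Hden; simpl in Hw, Hden |- *.
  unfold mobius, Cdiv, Cinv, Cmult, Cplus, RtoC; simpl.
  match goal with |- 0 < ?e =>
    replace e with ((IZR a * IZR d - IZR b * IZR c) * y / ((IZR d + IZR c * x) ^ 2 + (IZR c * y) ^ 2))
  end.
  - rewrite Hdet; apply Rdiv_lt_0_compat; lra.
  - field; nra.
Qed.

Lemma mobius_inv_r a b c d w : is_SL2Z a b c d -> 0 < Im w ->
  mobius a b c d (mobius d (- b) (- c) a w) = w.
Proof.
  intros Hdet Hw.
  pose proof (mobius_denom_neq0 _ _ _ _ _ (SL2Z_inv _ _ _ _ Hdet) Hw) as Hden.
  pose proof (SL2Z_det_C _ _ _ _ Hdet) as HdetC.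
  unfold mobius; rewrite !opp_IZR, !RtoC_opp in *.
  field; split; [exact Hden|].
  replace (_ + _)%C with (RtoC 1) by (rewrite <- HdetC; ring).
  intros E; injection E; exact R1_neq_R0.
Qed.

Lemma nearest_integer r : exists n : Z, - / 2 <= r - IZR n <= / 2.
Proof.
  exists (up (r + / 2) - 1)%Z.
  destruct (archimed (r + / 2)); rewrite minus_IZR; simpl (IZR 1); lra.
Qed.

(* |g^-1 w - n| * |a - c w| is the length of the nonzero lattice vector
   (d + n c) w - (b + n a). *)
Lemma in_gD0n_of_shortest a b c d w : is_SL2Z a b c d -> 0 < Im w ->
  shortest w a (- c) -> exists n, in_gD0n a b c d n w.
Proof.
  intros Hdet Hw [Hnz Hmin].
  set (z := mobius d (- b) (- c) a w).
  destruct (nearest_integer (Re z)) as [n Hn].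
  exists n, (Cminus z (RtoC (IZR n))); split.
  2:{ replace (Cplus _ _) with z by ring. symmetry; exact (mobius_inv_r _ _ _ _ _ Hdet Hw). }
  assert (Hden := mobius_denom_neq0 _ _ _ _ _ (SL2Z_inv _ _ _ _ Hdet) Hw).
  assert (Hshift : Cminus z (RtoC (IZR n))
    = Cdiv (Cplus (RtoC (IZR (- (b + n * a)))) (Cmult (RtoC (IZR (d + n * c))) w))
           (Cplus (RtoC (IZR a)) (Cmult (RtoC (IZR (- c))) w))).
  { rewrite Cplus_comm in Hden; unfold z, mobius.
    rewrite !opp_IZR, !plus_IZR, !mult_IZR, !RtoC_opp, !RtoC_plus, !RtoC_mult.
    rewrite opp_IZR, RtoC_opp in Hden.
    field; exact Hden. }
  assert (Hnz' : ((- (b + n * a))%Z, (d + n * c)%Z) <> (0%Z, 0%Z)).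
  { intros E; injection E; intros; unfold is_SL2Z in Hdet; nia. }
  pose proof (lnorm2_pos w a (- c) Hw Hnz) as H0.
  pose proof (Hmin _ _ Hnz') as H1.
  assert (Him := Im_mobius_pos _ _ _ _ _ (SL2Z_inv _ _ _ _ Hdet) Hw); fold z in Him.
  split; [|split].
  - destruct z as [zx zy]; simpl in *; lra.
  - destruct z as [zx zy]; simpl in *; lra.
  - rewrite Hshift, Cmod_div, !Cmod_lattice.
    2:{ apply Cmod_gt_0; rewrite Cmod_lattice; apply sqrt_lt_R0; exact H0. }
    apply Rle_div_r; [apply sqrt_lt_R0; exact H0|].
    rewrite Rmult_1_l; apply sqrt_le_1_alt; exact H1.
Qed.

Lemma local_min_shortest_critical x t0 a b :
  0 < t0 -> local_min_pos (fx x) t0 -> shortest (x, / t0) a b ->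
  (IZR a + IZR b * x) ^ 2 * t0 ^ 2 = IZR b ^ 2.
Proof.
  intros Ht0 [eps [Heps Hloc]] Hsh.
  apply hyperbola_local_min; [exact Ht0|].
  exists eps; split; [exact Heps|]; intros t Ht Hd.
  rewrite <- (fx_shortest _ _ _ _ Ht0 Hsh).
  eapply Rle_trans; [exact (Hloc t Ht Hd)|].
  apply fx_le; [exact Ht|exact (proj1 Hsh)].
Qed.

Lemma local_min_shortest_cusp x t0 :
  0 < t0 -> local_min_pos (fx x) t0 ->
  exists p q, (0 < q)%Z /\ shortest (x, / t0) p (- q).
Proof.
  intros Ht0 Hloc.
  assert (Hw : 0 < Im (x, / t0)) by (apply Rinv_0_lt_compat; exact Ht0).
  destruct (shortest_exists _ Hw) as [a [b Hsh]].
  destruct (Z.lt_trichotomy b 0) as [Hb|[Hb|Hb]].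
  - exists a, (- b)%Z; rewrite Z.opp_involutive; split; [lia|exact Hsh].
  - exfalso; subst b.
    pose proof (local_min_shortest_critical _ _ _ _ Ht0 Hloc Hsh) as Hcrit.
    assert (Ha : IZR a <> 0) by (apply not_0_IZR; intros ->; apply (proj1 Hsh); reflexivity).
    assert (0 < (IZR a + 0 * x) ^ 2 * t0 ^ 2) by (apply Rmult_lt_0_compat; apply pow2_gt_0; lra).
    simpl in Hcrit; lra.
  - exists (- a)%Z, b; split; [lia|exact (shortest_opp _ _ _ Hsh)].
Qed.

Theorem proposition4 (x t0 : R) :
  irrational x -> 0 < t0 -> local_min_pos (fx x) t0 ->
  exists (a b c d n : Z),
    is_SL2Z a b c d /\
    in_gD0n a b c d n (Cplus (RtoC x) (Cmult Ci (RtoC (/ t0)))) /\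
    c <> 0%Z /\
    exists p q : Z,
      (0 < q)%Z /\ Z.gcd p q = 1%Z /\ IZR a / IZR c = IZR p / IZR q /\
      t0 = Rabs (IZR q / (IZR q * x - IZR p)) /\
      fx x t0 = 2 * Rabs (IZR q * (IZR q * x - IZR p)).
Proof.
  intros _ Ht0 Hloc.
  assert (Hw : 0 < Im (x, / t0)) by (apply Rinv_0_lt_compat; exact Ht0).
  destruct (local_min_shortest_cusp x t0 Ht0 Hloc) as [p [q [Hq Hsh]]].
  assert (Hcrit := local_min_shortest_critical _ _ _ _ Ht0 Hloc Hsh).
  assert (Hgcd : Z.gcd p q = 1%Z).
  { rewrite <- Z.gcd_opp_r; exact (shortest_coprime _ _ _ Hw Hsh). }
  destruct (Zis_gcd_bezout _ _ _ (Zgcd_is_gcd p q)) as [u v Huv]; rewrite Hgcd in Huv.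
  assert (Hdet : is_SL2Z p (- v) q u) by (unfold is_SL2Z; lia).
  destruct (in_gD0n_of_shortest _ _ _ _ _ Hdet Hw Hsh) as [n Hn].
  exists p, (- v)%Z, q, u, n; rewrite Cplus_Ci_mult.
  split; [exact Hdet|]; split; [exact Hn|]; split; [lia|].
  exists p, q; split; [exact Hq|]; split; [exact Hgcd|]; split; [reflexivity|].
  rewrite (fx_shortest _ _ _ _ Ht0 Hsh).
  rewrite opp_IZR in Hcrit |- *.
  replace ((IZR p + - IZR q * x) ^ 2) with ((IZR q * x - IZR p) ^ 2) in Hcrit |- * by ring.
  replace ((- IZR q) ^ 2) with (IZR q ^ 2) in Hcrit |- * by ring.
  apply hyperbola_min_value; [exact Ht0|apply IZR_lt; exact Hq|exact Hcrit].
Qed.
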